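(* Let $n\ge2$, let $y_{\mathrm{ref}}=(0,\dots,0,1)\in O_n$ and $\ket{\psi_{\mathrm{ref}}}=\ket{\psi_{y_{\mathrm{ref}}}}$. For $y\in O_n$ define $u=y\oplus y_{\mathrm{ref}}\in\{0,1\}^n$, $v\in\{0,1\}^n$ by $v_l=\sum_{j=1}^{l-1}u_j \bmod 2$ for $l=1,\dots,n$, and $v'\in\{0,1\}^{n-1}$ by $v'_i=v_i+v_n \bmod 2$. Let $D(u,v')=Z(v')X(u)$ where $X(u)=\bigotimes_{i=1}^{n-1}X_i^{u_i}$ and $Z(v')=\bigotimes_{i=1}^{n-1}Z_i^{v'_i}$ act on $n-1$ qubits. Then $$\ket{\psi_y}=(-1)^{v\cdot y}\,D(u,v')\ket{\psi_{\mathrm{ref}}},$$ where $v\cdot y=\sum_{i=1}^n v_iy_i \bmod 2$.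
   Context: $E_n$ and $O_n$ are the even- and odd-weight strings in $\{0,1\}^n$. For $x\in E_n$, $\ket{\psi_x}=\ket{x_1\cdots x_{n-1}}$ (computational basis of $n-1$ qubits). For $y\in O_n$, $\ket{\psi_y}=\frac1{\sqrt n}\sum_{x\in E_n,\,d_H(x,y)=1}(A_n)_{yx}\ket{\psi_x}$, where $(A_n)_{yx}=\bra{y}A_n\ket{x}$ in the $n$-qubit computational basis (qubit 1 leftmost) and $A_n=\sum_{l=1}^nZ^{\otimes(l-1)}\otimes X\otimes I^{\otimes(n-l)}$. $X_i,Z_i$ are Pauli operators on qubit $i$; $d_H$ is Hamming distance. *)

(* Qubits/bit positions are 0-based: paper's qubit i is index i-1. *)
From mathcomp Require Import all_boot all_order all_algebra.
Set Implicit Arguments. Unset Strict Implicit. Unset Printing Implicit Defensive.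
Import Order.TTheory GRing.Theory Num.Theory.
Local Open Scope ring_scope.

Notation bits n := {ffun 'I_n -> bool}.

Definition weight n (x : bits n) : nat := (\sum_(i < n) (x i : nat))%N.
Definition dH n (x y : bits n) : nat := (\sum_(i < n) (x i != y i : nat))%N.

Section Q.
Variable R : rcfType.

Notation state m := {ffun bits m -> R}.

(* Single-qubit matrix elements <a|P|b> *)
Definition pI (a b : bool) : R := (a == b)%:R.
Definition pX (a b : bool) : R := (a != b)%:R.
Definition pZ (a b : bool) : R := (a == b)%:R * (-1) ^+ b.

Definition tens m (P : 'I_m -> bool -> bool -> R) (y x : bits m) : R :=
  \prod_(i < m) P i (y i) (x i).

Definition apply m (M : bits m -> bits m -> R) (s : state m) : state m :=
  [ffun a => \sum_(b : bits m) M a b * s b].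

Definition sscale m (c : R) (s : state m) : state m := [ffun a => c * s a].

Definition ssum m (I : finType) (P : pred I) (F : I -> state m) : state m :=
  [ffun a => \sum_(i | P i) F i a].

Definition ket m (b : bits m) : state m := [ffun a => (a == b)%:R].

(* (A_n)_{yx} = <y| sum_l Z^{(l-1)} (x) X (x) I^{(n-l)} |x> *)
Definition A_entry n (y x : bits n) : R :=
  \sum_(l < n) tens (fun i : 'I_n => if (i < l)%N then pZ else if i == l then pX else pI) y x.

Definition trunc n (x : bits n) : bits n.-1 :=
  [ffun i : 'I_n.-1 => x (widen_ord (leq_pred n) i)].

Definition psi n (y : bits n) : state n.-1 :=
  if odd (weight y) then
    sscale (Num.sqrt (n%:R))^-1
      (ssum (fun x : bits n => ~~ odd (weight x) && (dH x y == 1%N))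
            (fun x => sscale (A_entry y x) (ket (trunc x))))
  else ket (trunc y).

Definition yref n : bits n := [ffun i : 'I_n => val i == n.-1].

Definition xorb_bits n (y z : bits n) : bits n := [ffun i => y i (+) z i].

(* v_l = sum_{j<l} u_j mod 2 (0-based l) *)
Definition vfun n (u : bits n) (l : nat) : bool :=
  odd (\sum_(j < n | (j < l)%N) (u j : nat)).

Definition Xop n (u : bits n) : bits n.-1 -> bits n.-1 -> R :=
  tens (fun i : 'I_n.-1 => if u (widen_ord (leq_pred n) i) then pX else pI).

Definition Zop m (w : 'I_m -> bool) : bits m -> bits m -> R :=
  tens (fun i : 'I_m => if w i then pZ else pI).

Definition vprime n (u : bits n) (i : 'I_n.-1) : bool :=
  vfun u i (+) vfun u n.-1.

Definition vdot n (u y : bits n) : bool :=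
  odd (\sum_(i < n) (vfun u i && y i : nat)).

End Q.

From mathcomp Require Import all_boot all_order all_algebra.
Import GRing.Theory Num.Theory.
Local Open Scope ring_scope.

(* For odd y, the even neighbours of y are its n one-bit flips y + e_k, and A_n
   gives the flip at k the sign (-1)^(y_1 + ... + y_(k-1)), the prefix parity
   P_k(y).  Hence |psi_y> = n^(-1/2) sum_k (-1)^(P_k(y)) |trunc (y + e_k)>, with all
   signs +1 for y_ref.  Since (y_ref + e_k) + u = y + e_k, X(u) carries the terms of
   |psi_ref> to those of |psi_y>, and Z(v') multiplies the k-th one by
   (-1)^(v'.trunc (y + e_k)).  What remains is the parity identity
   P_k(y) = v.y + v'.trunc (y + e_k): expanding the right-hand side bilinearly, it
   collapses because v_l = P_l(y) for l < n and P_n(y) = 1. *)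

Lemma odd_sum_bool (I : Type) (r : seq I) (P : pred I) (F : I -> bool) :
  odd (\sum_(i <- r | P i) (F i : nat)) = \big[addb/false]_(i <- r | P i) F i.
Proof.
rewrite (big_morph odd oddD (erefl : odd 0 = false)).
by apply: eq_bigr => i _; rewrite oddb.
Qed.

Lemma prodr_sign (R : pzRingType) (I : Type) (r : seq I) (P : pred I) (F : I -> bool) :
  \prod_(i <- r | P i) (-1) ^+ F i = (-1) ^+ (\big[addb/false]_(i <- r | P i) F i) :> R.
Proof.
have sign0 : (-1) ^+ false = 1 :> R by [].
by rewrite (big_morph (fun b : bool => (-1) ^+ b : R) (@signr_addb R) sign0).
Qed.

Lemma big_nat_addb_pred1 (m k : nat) (F : nat -> bool) :
  \big[addb/false]_(0 <= i < m) (F i && (i == k)) = (k < m)%N && F k.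
Proof.
elim: m => [|m IHm]; first by rewrite big_geq.
rewrite big_nat_recr //= IHm ltnS.
case: (eqVneq m k) => [->|ne]; first by rewrite ltnn leqnn andbT.
by rewrite andbF addbF ltn_neqAle eq_sym ne.
Qed.

Definition prefix_parity (Y : nat -> bool) (l : nat) : bool :=
  \big[addb/false]_(0 <= j < l) Y j.

Lemma prefix_paritySn Y l : prefix_parity Y l.+1 = prefix_parity Y l (+) Y l.
Proof. by rewrite /prefix_parity big_nat_recr. Qed.

Lemma prefix_parity_sign {Y : nat -> bool} {m k : nat} :
  (k <= m)%N -> prefix_parity Y m.+1 ->
  prefix_parity Y k =
    \big[addb/false]_(0 <= i < m.+1) (prefix_parity Y i && Y i)
    (+) \big[addb/false]_(0 <= i < m)
          ((prefix_parity Y i (+) prefix_parity Y m) && (Y i (+) (i == k))).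
Proof.
move=> km; rewrite prefix_paritySn; set P := prefix_parity Y => odd_m.
have -> : \big[addb/false]_(0 <= i < m) ((P i (+) P m) && (Y i (+) (i == k))) =
    \big[addb/false]_(0 <= i < m) (P i && Y i) (+) ((k < m)%N && P k)
    (+) (P m && P m) (+) ((k < m)%N && P m).
  have distr i : (P i (+) P m) && (Y i (+) (i == k)) =
      (P i && Y i) (+) (P i && (i == k)) (+) (P m && Y i) (+) (P m && (i == k)).
    by rewrite andb_addl !andb_addr !addbA.
  rewrite (eq_bigr _ (fun i _ => distr i)) !big_split /= !big_nat_addb_pred1.
  by rewrite -(big_distrr (plus := addb)).
rewrite big_nat_recr //= andbb.
have -> : Y m = ~~ P m by move: odd_m; case: (Y m); case: (P m).
case: ltnP => [_ | mk]; last have -> : k = m by apply/eqP; rewrite eqn_leq km.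
  by case: (P m); case: (P k); case: (\big[addb/false]_(0 <= i < m) _).
by case: (P m); case: (\big[addb/false]_(0 <= i < m) _).
Qed.

Lemma ffun_neq_exists (I : finType) (T : eqType) (f g : {ffun I -> T}) :
  f != g -> exists i, f i != g i.
Proof.
move=> ne; apply/existsP; apply: contraR ne => /existsPn fg.
by apply/eqP/ffunP => i; apply/eqP; rewrite -[_ == _]negbK fg.
Qed.

Definition bitflip {n} (y : bits n) (k : 'I_n) : bits n := [ffun i => y i (+) (i == k)].

Lemma bitflip_inj n (y : bits n) : injective (bitflip y).
Proof.
move=> k l /ffunP/(_ k); rewrite !ffunE eqxx.
by case: (y k); case: eqP.
Qed.

Lemma odd_weight_bitflip n (y : bits n) k :
  odd (weight (bitflip y k)) = ~~ odd (weight y).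
Proof.
rewrite /weight !odd_sum_bool /bitflip.
under eq_bigr do rewrite ffunE.
rewrite big_split /= [X in _ (+) X](bigD1 k) //= eqxx.
by rewrite [X in true (+) X]big1 ?addbF ?addbT // => i /negbTE.
Qed.

Lemma dH_bitflip n (y : bits n) k : dH (bitflip y k) y = 1%N.
Proof.
rewrite /dH (bigD1 k) //= big1 => [|i ik]; rewrite ffunE ?eqxx ?(negbTE ik).
  by case: (y k).
by rewrite addbF eqxx.
Qed.

Lemma dH_eq1_bitflip n (x y : bits n) :
  (dH x y == 1%N) = (x \in [set bitflip y k | k : 'I_n]).
Proof.
apply/eqP/imsetP => [dxy | [k _ ->]]; last exact: dH_bitflip.
have [k xyk] : exists k, x k != y k.
  apply/existsP; apply: contraT => /existsPn xy.
  by move: dxy; rewrite /dH big1 // => i _; rewrite -[_ != _]negbK xy.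
exists k => //; move: dxy; rewrite /dH (bigD1 k) //= xyk add1n => -[].
move/eqP; rewrite sum_nat_eq0 => /forallP xy.
apply/ffunP => i; rewrite ffunE; case: (eqVneq i k) => [->|ik].
  by move: xyk; case: (x k); case: (y k).
by move: (xy i); rewrite ik addbF; case: (x i); case: (y i).
Qed.

Section Operators.
Variable R : rcfType.

Lemma tens_eq0 {m} (i : 'I_m) (P : 'I_m -> bool -> bool -> R) (a b : bits m) :
  P i (a i) (b i) = 0 -> tens P a b = 0.
Proof. by move=> Pi0; rewrite /tens (bigD1 i) //= Pi0 mul0r. Qed.

Lemma apply_monomial m (M : bits m -> bits m -> R) (f : bits m -> bits m) s a :
  (forall b, b != f a -> M a b = 0) -> apply M s a = M a (f a) * s (f a).
Proof.
by move=> M0; rewrite ffunE (bigD1 (f a)) //= big1 ?addr0 // => b /M0 ->; rewrite mul0r.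
Qed.

Lemma apply_Zop m (w : 'I_m -> bool) (s : {ffun bits m -> R}) a :
  apply (Zop R w) s a = (-1) ^+ (\big[addb/false]_i (w i && a i)) * s a.
Proof.
rewrite (@apply_monomial _ _ id) => [|b /ffun_neq_exists[i ab]]; last first.
  by apply: (tens_eq0 i); case: (w i); rewrite /pZ /pI eq_sym (negbTE ab) ?mul0r.
congr (_ * _); rewrite /Zop /tens -prodr_sign; apply: eq_bigr => i _.
by case: (w i); rewrite /pZ /pI eqxx ?mul1r.
Qed.

Lemma apply_Xop n (u : bits n) (s : {ffun bits n.-1 -> R}) a :
  apply (Xop R u) s a = s [ffun i => a i (+) u (widen_ord (leq_pred n) i)].
Proof.
set ua := [ffun i => _].
have entry i b : (if u (widen_ord (leq_pred n) i) then pX R else pI R) (a i) b = pI R (ua i) b.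
  by rewrite /ua ffunE /pX /pI; case: (u _); case: (a i); case: b.
rewrite (@apply_monomial _ _ (fun=> ua)) => [|b /ffun_neq_exists[i bi]].
  by rewrite /Xop /tens big1 ?mul1r // => i _; rewrite entry /pI eqxx.
by apply: (tens_eq0 i); rewrite entry /pI eq_sym (negbTE bi).
Qed.

Lemma A_entry_bitflip n (y : bits n) k :
  A_entry R y (bitflip y k) = (-1) ^+ vfun y k.
Proof.
rewrite /A_entry (bigD1 k) //= big1 ?addr0 => [|l lk]; last first.
  apply: (tens_eq0 k); rewrite ffunE eqxx eq_sym (negbTE lk).
  by case: ifP; rewrite /pZ /pI; case: (y k); rewrite ?mul0r.
rewrite /tens /vfun odd_sum_bool -prodr_sign [RHS]big_mkcond /=.
apply: eq_bigr => i _; rewrite ffunE.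
case: (ltngtP i k) => [ik | ki | /val_inj ->]; last by rewrite eqxx /pX; case: (y k).
- by rewrite -val_eqE /= ltn_eqF // addbF /pZ eqxx mul1r.
- by rewrite -val_eqE /= gtn_eqF // addbF /pI eqxx.
Qed.

Lemma psi_oddE n (y : bits n) a : odd (weight y) ->
  psi R y a = (Num.sqrt n%:R)^-1 *
    \sum_(k | a == trunc (bitflip y k)) (-1) ^+ vfun y k.
Proof.
move=> hy; rewrite /psi hy !ffunE; congr (_ * _).
rewrite (eq_bigl (fun x => x \in [set bitflip y k | k : 'I_n])) => [|x]; last first.
  rewrite dH_eq1_bitflip.
  by case: imsetP => [[k _ ->]|]; rewrite ?andbF ?odd_weight_bitflip ?hy.
rewrite big_imset /=; last by move=> k l _ _ /bitflip_inj.
rewrite [RHS]big_mkcond; apply: eq_bigr => k _.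
by rewrite !ffunE A_entry_bitflip; case: eqP; rewrite ?mulr1 ?mulr0.
Qed.
End Operators.

Lemma vfun_yref n (k : 'I_n) : vfun (yref n) k = false.
Proof.
rewrite /vfun big1 // => j jk; rewrite ffunE ltn_eqF //.
by apply: (leq_trans jk); rewrite -ltnS (ltn_predK (ltn_ord k)).
Qed.

Lemma odd_weight_yref n : (0 < n)%N -> odd (weight (yref n)).
Proof.
rewrite -ltn_predL => n_gt0.
rewrite /weight odd_sum_bool (bigD1 (Ordinal (n_gt0 : n.-1 < n)%N)) //=.
by rewrite ffunE eqxx big1 // => i; rewrite -val_eqE ffunE => /negbTE.
Qed.

Lemma vfun_xor_yref n (y : bits n) l :
  (l <= n.-1)%N -> vfun (xorb_bits y (yref n)) l = vfun y l.
Proof.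
move=> ln; rewrite /vfun; apply: congr1; apply: eq_bigr => j jl; rewrite !ffunE.
by rewrite (ltn_eqF (leq_trans jl ln)) addbF.
Qed.

Section SignIdentity.
Variables (m : nat) (y : bits m.+1).
Let Y (j : nat) : bool := y (inord j).

Lemma vfun_prefix_parity l : (l <= m.+1)%N -> vfun y l = prefix_parity Y l.
Proof.
move=> lm; rewrite /vfun odd_sum_bool /prefix_parity (big_nat_widen _ _ _ _ _ lm).
by rewrite big_mkord; apply: eq_bigr => i _; rewrite /Y inord_val.
Qed.

Lemma vfun_sign (k : 'I_m.+1) : odd (weight y) ->
  vfun y k = vdot (xorb_bits y (yref m.+1)) y
    (+) \big[addb/false]_i (vprime (xorb_bits y (yref m.+1)) i && trunc (bitflip y k) i).
Proof.
move=> hy; set u := xorb_bits y (yref m.+1).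
have vfun_u l : (l <= m)%N -> vfun u l = prefix_parity Y l.
  by move=> lm; rewrite vfun_xor_yref // vfun_prefix_parity // ltnW.
have km : (k <= m)%N by rewrite -ltnS.
have odd_Y : prefix_parity Y m.+1.
  by rewrite -vfun_prefix_parity // /vfun; under eq_bigl do rewrite ltn_ord.
rewrite vfun_prefix_parity ?leqW // (prefix_parity_sign km odd_Y).
congr (_ (+) _).
  rewrite /vdot odd_sum_bool big_mkord; apply: eq_bigr => i _.
  have im : (i <= m)%N by rewrite -ltnS.
  by rewrite vfun_u // /Y inord_val.
rewrite big_mkord; apply: eq_bigr => i _.
rewrite /vprime /= !vfun_u ?(ltnW (ltn_ord i)) // /trunc /bitflip !ffunE.
have -> : Y i = y (widen_ord (leq_pred m.+1) i).
  by rewrite /Y; apply: congr1; apply: val_inj; rewrite /= inordK // ltnS ltnW.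
by rewrite -val_eqE.
Qed.
End SignIdentity.

Lemma eq_trunc_bitflip_xor n (y z : bits n) k (a : bits n.-1) :
  ([ffun i => a i (+) xorb_bits y z (widen_ord (leq_pred n) i)] == trunc (bitflip z k))
  = (a == trunc (bitflip y k)).
Proof.
apply/eqP/eqP => /ffunP eq_a; apply/ffunP => i; move: (eq_a i); rewrite !ffunE;
  by case: (a i); case: (y _); case: (z _); case: (_ == k).
Qed.

Theorem theorem2 (R : rcfType) (n : nat) (hn : (2 <= n)%N) (y : bits n)
  (hy : odd (weight y)) :
  let u := xorb_bits y (yref n) in
  psi R y =
    sscale ((-1) ^+ vdot u y) (apply (Zop R (vprime u)) (apply (Xop R u) (psi R (yref n)))).
Proof.
case: n hn y hy => [|m] // _ y hy /=; apply/ffunP => a.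
rewrite ffunE apply_Zop (@apply_Xop R m.+1) !(@psi_oddE R m.+1) ?odd_weight_yref //.
rewrite [RHS]mulrA [RHS]mulrCA; congr (_ * _); rewrite mulr_sumr.
under [RHS]eq_bigl do rewrite eq_trunc_bitflip_xor.
apply: eq_bigr => k /eqP ->.
by rewrite vfun_yref mulr1 -signr_addb -vfun_sign.
Qed.
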